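(* Let $G=(V,E)$ be a graph and $v\in V$. Suppose that $G$ is $\mathcal{R}_d$-closed, $\deg_G(v)=k\geq d+1$, and $G$ contains no $K_{d+2}$ as a subgraph. Then $$\mathrm{rc}^*_d(G,v)\geq d+1-\frac{1}{k+1}\binom{d+2}{2}.$$
   Context: $r_d$ is the rank function of the $d$-dimensional generic rigidity matroid $\mathcal{R}_d$ (linear independence of rows of the rigidity matrix of a generic $d$-dimensional framework); $r_d(H)$ is the rank of $E(H)$. $G$ is $\mathcal{R}_d$-closed if $r_d(G+uv)=r_d(G)+1$ for every non-adjacent pair $u,v$. Let $\pi$ be a uniformly random ordering of $V$, $T_v^\pi$ the set of vertices preceding $v$ in $\pi$, $E_v$ the set of edges incident with $v$, and $E_v^\pi=\{vu\in E_v:u\in T_v^\pi\}$. Define $\mathrm{rc}^*_d(G,v,\pi)=r_d(G-E_v+E_v^\pi)-r_d(G-v)$ and $\mathrm{rc}^*_d(G,v)=\mathbb{E}(\mathrm{rc}^*_d(G,v,\pi))$. *)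

From HB Require Import structures.
From mathcomp Require Import all_boot all_order all_algebra all_fingroup.
From mathcomp Require Import boolp reals.
Set Implicit Arguments. Unset Strict Implicit. Unset Printing Implicit Defensive.
Import Order.TTheory GRing.Theory Num.Theory.
Local Open Scope ring_scope.

Section Rigidity.
Variables (R : realType) (T : finType) (d : nat).

(* Rows are indexed by ordered pairs (a,b);
   the row of (a,b) is zero unless F a b, in which case it is the usual row
   (p a - p b at the block of a, p b - p a at the block of b).  Each undirected
   edge thus appears twice (once negated), which does not change the rank. *)
Definition rigmx (F : rel T) (p : T -> 'rV[R]_d) :
  'M[R]_(#|{: T * T}|, #|{: T * 'I_d}|) :=
  \matrix_(i, j)
    let ab := enum_val i in let wk := enum_val j in
    if F ab.1 ab.2 then
      (if wk.1 == ab.1 then p ab.1 0 wk.2 - p ab.2 0 wk.2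
       else if wk.1 == ab.2 then p ab.2 0 wk.2 - p ab.1 0 wk.2 else 0)
    else 0.

(* d-dimensional generic rigidity matroid rank r_d(F): the rank of the
   rigidity matrix at a generic placement, i.e. the maximum over all
   placements p : T -> R^d. *)
Definition rd (F : rel T) : nat :=
  (\max_(n < #|{: T * T}|.+1 | `[< exists p, \rank (rigmx F p) = n >]) n)%N.

End Rigidity.

Section Graphs.
Variable T : finType.

Definition add_edge (e : rel T) (u v : T) : rel T :=
  fun a b => e a b || ((a == u) && (b == v)) || ((a == v) && (b == u)).

Definition del_vertex (e : rel T) (v : T) : rel T :=
  fun a b => [&& e a b, a != v & b != v].

Definition precedes (s : {perm T}) (u v : T) : bool :=
  (enum_rank (s u) < enum_rank (s v))%N.

Definition keep_earlier (e : rel T) (v : T) (s : {perm T}) : rel T :=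
  fun a b => e a b &&
    (if a == v then precedes s b v else if b == v then precedes s a v else true).

Definition deg (e : rel T) (v : T) : nat := #|[set u | e v u]|.

Definition Rd_closed (R : realType) (d : nat) (e : rel T) : Prop :=
  forall u v : T, u != v -> ~~ e u v ->
    rd R d (add_edge e u v) = (rd R d e).+1.

Definition has_Kn_subgraph (e : rel T) (n : nat) : Prop :=
  exists S : {set T}, #|S| = n /\
    {in S &, forall a b, a != b -> e a b}.

Definition rcstar_pi (R : realType) (d : nat) (e : rel T) (v : T)
  (s : {perm T}) : nat :=
  (rd R d (keep_earlier e v s) - rd R d (del_vertex e v))%N.

Definition rcstar (R : realType) (d : nat) (e : rel T) (v : T) : R :=
  (\sum_(s : {perm T}) (rcstar_pi R d e v s)%:R) / (#|{perm T}|)%:R.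

End Graphs.

(* Let S be the set of neighbours of v preceding it in the ordering, so that
   G - E_v + E_v^pi is G - v with v joined to S.  If |S| <= d, a generic
   position of v adds |S| independent rows (0-extension).  If |S| >= d + 1,
   two vertices a, b of S are non-adjacent, since otherwise v and d + 1
   vertices of S span a K_{d+2}; by R_d-closedness ab is independent of G,
   hence of G - v, and putting v at the midpoint of a and b makes the row of
   ab a combination of those of va and vb, so the rank grows by d + 1
   (1-extension).  Hence rc*_d(G,v,pi) >= min(|S|, d + 1).  The position of v
   within its closed neighbourhood is uniform on {0, ..., k}, and
   sum_(j <= k) min(j, d + 1) = (k + 1)(d + 1) - C(d+2, 2).
   Genericity is handled line by line: the rank of a matrix depending affinely
   on the placement can only drop at the roots of a nonzero polynomial, so
   finitely many generic conditions hold simultaneously somewhere. *)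

From HB Require Import structures.
From mathcomp Require Import all_boot all_order all_algebra all_fingroup.
From mathcomp Require Import boolp reals.
From mathcomp Require Import ring zify.
Set Implicit Arguments. Unset Strict Implicit. Unset Printing Implicit Defensive.
Import Order.TTheory GRing.Theory Num.Theory.
Local Open Scope ring_scope.

Lemma poly_exists_nonroot (R : numDomainType) (q : {poly R}) :
  q != 0 -> exists t : R, ~~ root q t.
Proof.
move=> q_neq0; apply/not_existsP => all_roots.
pose ts := [seq i%:R : R | i <- iota 0 (size q)].
have ts_roots : all (root q) ts.
  by apply/allP => t _; apply/negPn/negP => /(all_roots t).
have ts_uniq : uniq ts.
  by rewrite map_inj_uniq ?iota_uniq // => i j /eqP; rewrite eqr_nat => /eqP.
by have := max_poly_roots q_neq0 ts_roots ts_uniq; rewrite size_map size_iota ltnn.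
Qed.

Section MatrixRank.
Variable F : fieldType.

Lemma mxrank_unit_minor m n (A : 'M[F]_(m, n)) r : (r <= \rank A)%N ->
  exists X : 'M_(r, m), exists Y : 'M_(n, r), X *m A *m Y = 1%:M.
Proof.
move=> le_r_rank.
exists (pid_mx r *m invmx (col_ebase A)), (invmx (row_ebase A) *m pid_mx r).
rewrite -[X in _ *m X *m _](mulmx_ebase A) !mulmxA mulmxKV ?col_ebase_unit //.
rewrite -!mulmxA mulKVmx ?row_ebase_unit // mulmxA !mul_pid_mx -pid_mx_1.
congr pid_mx; move: (rank_leq_row A) (rank_leq_col A); lia.
Qed.

Lemma mxrank_mxsub_le m n m' n' (f : 'I_m' -> 'I_m) (g : 'I_n' -> 'I_n)
    (A : 'M[F]_(m, n)) :
  (\rank (mxsub f g A) <= \rank A)%N.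
Proof.
rewrite mxsubrc; apply: leq_trans (mxrankS (rowsub_sub _ _)) _.
by rewrite -[A in colsub _ A]mulmx1 -mulmx_colsub mxrankM_maxl.
Qed.

(* Along the segment from A to B the rank stays >= r off the roots of a
   determinant of an r x r minor, which does not vanish at 0 or at 1. *)
Lemma mxrank_lerp_ge m n (A B : 'M[F]_(m, n)) r :
  (r <= \rank A)%N \/ (r <= \rank B)%N ->
  exists2 q : {poly F}, q != 0 &
    forall t, ~~ root q t -> (r <= \rank ((1 - t) *: A + t *: B)%R)%N.
Proof.
move=> rank_AB.
have [X [Y minor1]] : exists X : 'M_(r, m), exists Y : 'M_(n, r),
    X *m A *m Y = 1%:M \/ X *m B *m Y = 1%:M.
  by case: rank_AB => /mxrank_unit_minor [X [Y ?]]; exists X, Y; [left|right].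
pose Q := \matrix_(i, j) ((1 - 'X) * ((X *m A *m Y) i j)%:P
                          + 'X * ((X *m B *m Y) i j)%:P).
have detQ t : (\det Q).[t] = \det (X *m ((1 - t) *: A + t *: B) *m Y).
  rewrite -horner_evalE -det_map_mx mulmxDr mulmxDl -!scalemxAr -!scalemxAl.
  by congr (\det _); apply/matrixP => i j; rewrite !mxE /= horner_evalE !hornerE.
have [t0 minor_t0] : exists t0, X *m ((1 - t0) *: A + t0 *: B) *m Y = 1%:M.
  by case: minor1 => ?; [exists 0 | exists 1];
    rewrite ?subr0 ?subrr scale1r scale0r ?addr0 ?add0r.
exists (\det Q) => [|t].
  apply: contra_neq (oner_neq0 F) => detQ0.
  by have := detQ t0; rewrite detQ0 horner0 minor_t0 det1 => ->.
rewrite /root detQ -unitfE -unitmxE => minor_unit.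
have inv_minor : invmx (X *m ((1 - t) *: A + t *: B) *m Y) *m X
    *m ((1 - t) *: A + t *: B) *m Y = 1%:M.
  by rewrite -!mulmxA [X *m (_ *m Y)]mulmxA mulVmx.
exact: mulmx1_min_rank inv_minor.
Qed.

Lemma mxrank_split_ker m1 m2 n k (X : 'M[F]_(m1, n)) (A : 'M[F]_(m2, n))
    (P : 'M[F]_(n, k)) :
  (A <= X)%MS -> A *m P = 0 -> (\rank (X *m P) + \rank A <= \rank X)%N.
Proof.
move=> sAX AP0; rewrite -(mxrank_mul_ker X P) leq_add2l.
by apply: mxrankS; rewrite sub_capmx sAX sub_kermx AP0 eqxx.
Qed.

End MatrixRank.

Section GenericPlacements.
Variables (R : numFieldType) (T : finType) (d : nat).
Local Notation placement := (T -> 'rV[R]_d).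

Definition lerp (t : R) (p1 p2 : placement) : placement :=
  fun x => (1 - t) *: p1 x + t *: p2 x.

(* A line-wise form of "holds on a nonempty Zariski-open set": on each line
   through a placement satisfying P, P fails at finitely many points only. *)
Definition generic (P : placement -> Prop) :=
  forall p1 p2, P p1 \/ P p2 ->
  exists2 q : {poly R}, q != 0 & forall t, ~~ root q t -> P (lerp t p1 p2).

Definition lerp_linear m n (M : placement -> 'M[R]_(m, n)) :=
  forall t p1 p2, M (lerp t p1 p2) = (1 - t) *: M p1 + t *: M p2.

Lemma generic_rank_ge m n (M : placement -> 'M[R]_(m, n)) r :
  lerp_linear M -> generic (fun p => (r <= \rank (M p))%N).
Proof.
move=> M_lin p1 p2 /mxrank_lerp_ge [q q_neq0 rank_ge].
by exists q => // t /rank_ge; rewrite M_lin.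
Qed.

Lemma genericI (P Q : placement -> Prop) :
  generic P -> generic Q -> generic (fun p => P p /\ Q p).
Proof.
move=> genP genQ p1 p2 PQ12.
have [qP qP_neq0 Pt] : exists2 q : {poly R}, q != 0 &
    forall t, ~~ root q t -> P (lerp t p1 p2).
  by apply: genP; case: PQ12 => [[]|[]]; auto.
have [qQ qQ_neq0 Qt] : exists2 q : {poly R}, q != 0 &
    forall t, ~~ root q t -> Q (lerp t p1 p2).
  by apply: genQ; case: PQ12 => [[]|[]]; auto.
exists (qP * qQ) => [|t]; first by rewrite mulf_neq0.
by rewrite rootM negb_or => /andP [/Pt ? /Qt ?].
Qed.

Lemma generic_exists2 (P Q : placement -> Prop) :
  generic P -> generic Q -> (exists p, P p) -> (exists p, Q p) ->
  exists p, P p /\ Q p.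
Proof.
move=> genP genQ [p1 P1] [p2 Q2].
have [qP qP_neq0 Pt] := genP p1 p2 (or_introl P1).
have [qQ qQ_neq0 Qt] := genQ p1 p2 (or_intror Q2).
have [t] := poly_exists_nonroot (mulf_neq0 qP_neq0 qQ_neq0).
by rewrite rootM negb_or => /andP [/Pt ? /Qt ?]; exists (lerp t p1 p2).
Qed.

Lemma lerp_linear_mulmx m n k (M : placement -> 'M[R]_(m, n)) (P : 'M[R]_(n, k)) :
  lerp_linear M -> lerp_linear (fun p => M p *m P).
Proof. by move=> M_lin t p1 p2; rewrite M_lin mulmxDl -!scalemxAl. Qed.

Lemma lerp_linear_comp m n (M : placement -> 'M[R]_(m, n)) (u : placement -> placement) :
  lerp_linear M -> (forall t p1 p2, u (lerp t p1 p2) = lerp t (u p1) (u p2)) ->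
  lerp_linear (fun p => M (u p)).
Proof. by move=> M_lin u_lerp t p1 p2 /=; rewrite u_lerp M_lin. Qed.

Definition midpoint_at (v a b : T) (p : placement) : placement :=
  fun x => if x == v then 2^-1 *: (p a + p b) else p x.

Lemma midpoint_at_lerp v a b t p1 p2 :
  midpoint_at v a b (lerp t p1 p2) =
  lerp t (midpoint_at v a b p1) (midpoint_at v a b p2).
Proof.
apply: funext => x; rewrite /midpoint_at /lerp; case: ifP => // _.
rewrite !scalerA mulrC [t * _]mulrC -!scalerA -scalerDr !scalerDr.
by rewrite addrACA.
Qed.

End GenericPlacements.

Section RigidityMatrix.
Variables (R : realType) (T : finType) (d : nat).
Local Notation placement := (T -> 'rV[R]_d).
Local Notation ncols := #|{: T * 'I_d}|.

Definition rigrow (p : placement) (x y : T) : 'rV[R]_ncols :=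
  \row_j (let wk := enum_val j in
    if wk.1 == x then p x 0 wk.2 - p y 0 wk.2
    else if wk.1 == y then p y 0 wk.2 - p x 0 wk.2 else 0).

Definition avoids (F : rel T) (v : T) :=
  forall x y, F x y -> (x != v) && (y != v).

Definition vertex_proj (v : T) : 'M[R]_ncols :=
  diag_mx (\row_j ((enum_val j).1 == v)%:R).

Definition unit_row (k : nat) : 'rV[R]_d := \row_j (j == k :> nat)%:R.

Lemma row_rigmx (F : rel T) (p : placement) i :
  row i (rigmx F p) = if F (enum_val i).1 (enum_val i).2
                      then rigrow p (enum_val i).1 (enum_val i).2 else 0.
Proof. by apply/rowP => j; rewrite !mxE /=; case: ifP; rewrite ?mxE. Qed.

Lemma rigrow_sub (F : rel T) (p : placement) x y :
  F x y -> (rigrow p x y <= rigmx F p)%MS.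
Proof.
move=> Fxy; have := row_sub (enum_rank (x, y)) (rigmx F p).
by rewrite row_rigmx enum_rankK /= Fxy.
Qed.

Lemma rigmx_subP m (F : rel T) (p : placement) (M : 'M[R]_(m, ncols)) :
  (forall x y, F x y -> (rigrow p x y <= M)%MS) -> (rigmx F p <= M)%MS.
Proof.
move=> rows_sub; apply/row_subP => i; rewrite row_rigmx.
by case: ifP => [/rows_sub|_]; rewrite ?sub0mx.
Qed.

Lemma rigmx_subrel (F F' : rel T) (p : placement) :
  subrel F F' -> (rigmx F p <= rigmx F' p)%MS.
Proof. by move=> FF'; apply: rigmx_subP => x y /FF'/rigrow_sub. Qed.

Lemma rigmx_eq_off (F : rel T) v (p q : placement) :
  avoids F v -> (forall x, x != v -> q x = p x) -> rigmx F q = rigmx F p.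
Proof.
move=> F_v qp; apply/matrixP => i j; rewrite !mxE /=.
by case: ifP => // /F_v /andP [xv yv]; rewrite !qp.
Qed.

Lemma rigmx_vertex_proj (F : rel T) v (p : placement) :
  avoids F v -> rigmx F p *m vertex_proj v = 0.
Proof.
move=> F_v; rewrite mul_mx_diag; apply/matrixP => i j; rewrite !mxE /=.
case: ifP => [/F_v /andP [xv yv]|]; last by rewrite mul0r.
case: (eqVneq (enum_val j).1 v) => [->|]; last by rewrite mulr0.
by rewrite eq_sym (negbTE xv) eq_sym (negbTE yv) mul0r.
Qed.

Lemma rigrow_midpoint (p : placement) v x y :
  x != y -> x != v -> y != v -> p v = 2^-1 *: (p x + p y) ->
  rigrow p x y = 2 *: (rigrow p v x + rigrow p v y).
Proof.
move=> xy xv yv pv; apply/rowP => j; rewrite !mxE /=.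
have pvk k : p v 0 k = 2^-1 * (p x 0 k + p y 0 k) by rewrite pv !mxE.
have [yx vx vy] : [/\ y != x, v != x & v != y] by rewrite ![_ == x]eq_sym ![v == _]eq_sym.
have neqs := (negbTE xy, negbTE yx, negbTE xv, negbTE vx, negbTE yv, negbTE vy).
case: (enum_val j) => w k /=; rewrite pvk.
have [->|_] := eqVneq w x; first by rewrite ?neqs; field.
have [->|_] := eqVneq w y; first by rewrite ?neqs; field.
by have [_|_] := eqVneq w v; [field | rewrite addr0 mulr0].
Qed.

Lemma rigmx_add_edge_midpoint (F K : rel T) (p : placement) v a b :
  subrel F K -> K v a -> K v b -> a != b -> a != v -> b != v ->
  p v = 2^-1 *: (p a + p b) -> (rigmx (add_edge F a b) p <= rigmx K p)%MS.
Proof.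
move=> FK Kva Kvb ab av bv pv.
have mid_sub x y : x != y -> x != v -> y != v -> K v x -> K v y ->
    p v = 2^-1 *: (p x + p y) -> (rigrow p x y <= rigmx K p)%MS.
  move=> xy xv yv Kvx Kvy pv'; rewrite (rigrow_midpoint xy xv yv pv').
  by rewrite scalemx_sub // addmx_sub // rigrow_sub.
apply: rigmx_subP => x y; rewrite /add_edge.
case/orP => [/orP [/FK/rigrow_sub //|]|] /andP [/eqP -> /eqP ->].
  exact: mid_sub.
by apply: mid_sub; rewrite // 1?eq_sym // addrC.
Qed.

Lemma lerp_linear_rigmx (F : rel T) : lerp_linear (fun p : placement => rigmx F p).
Proof.
move=> t p1 p2; apply/matrixP => i j; rewrite !mxE /lerp.
case: ifP => _; last by rewrite !mulr0 addr0.
case: ifP => _; first by rewrite !mxE; ring.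
case: ifP => _; first by rewrite !mxE; ring.
by rewrite !mulr0 addr0.
Qed.

Lemma rank_rigmx_le_rd (F : rel T) (p : placement) :
  (\rank (rigmx F p) <= rd R d F)%N.
Proof.
have lt_rank : (\rank (rigmx F p) < #|{: T * T}|.+1)%N by rewrite ltnS rank_leq_row.
by apply: (leq_bigmax_cond (Ordinal lt_rank)); apply/asboolP; exists p.
Qed.

Lemma exists_max_rank (F : rel T) :
  exists p : placement, (rd R d F <= \rank (rigmx F p))%N.
Proof.
have lt_rank : (\rank (rigmx F (fun=> 0%R : 'rV[R]_d)) < #|{: T * T}|.+1)%N.
  by rewrite ltnS rank_leq_row.
have attained : `[< exists p : placement, \rank (rigmx F p) = Ordinal lt_rank >].
  by apply/asboolP; exists (fun=> 0).
rewrite /rd (bigop.bigmax_eq_arg (Ordinal lt_rank) attained).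
by case: arg_maxnP => // i /asboolP [p <-] _; exists p.
Qed.

Lemma generic_max_rank (F : rel T) :
  generic (fun p : placement => (rd R d F <= \rank (rigmx F p))%N).
Proof. exact/generic_rank_ge/lerp_linear_rigmx. Qed.

Lemma exists_max_rank_and (F : rel T) (P : placement -> Prop) :
  generic P -> (exists p, P p) ->
  exists p, \rank (rigmx F p) = rd R d F /\ P p.
Proof.
move=> genP exP.
have [p [rank_ge Pp]] :=
  generic_exists2 (@generic_max_rank F) genP (exists_max_rank F) exP.
by exists p; split => //; apply/eqP; rewrite eqn_leq rank_ge rank_rigmx_le_rd.
Qed.

(* The rows of the edges [v x], x in S, at the columns [(v, sg x)] form an
   identity minor. *)
Lemma rank_vertex_proj_ge (F : rel T) (q : placement) v (S : {set T})
    (sg : T -> nat) :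
  {subset S <= F v} -> {in S, forall x, sg x < d}%N -> {in S &, injective sg} ->
  {in S, forall x, q v - q x = unit_row (sg x)} ->
  (#|S| <= \rank (rigmx F q *m vertex_proj v))%N.
Proof.
move=> SF sg_lt sg_inj qS.
pose xs (i : 'I_#|S|) := enum_val i.
have xsS i : xs i \in S := enum_valP i.
pose col i : 'I_d := Ordinal (sg_lt _ (xsS i)).
have minor1 : mxsub (fun i => enum_rank (v, xs i)) (fun i => enum_rank (v, col i))
    (rigmx F q *m vertex_proj v) = 1%:M.
  apply/matrixP => i j; rewrite mul_mx_diag !mxE !enum_rankK /= eqxx mulr1.
  have Fvx : F v (xs i) := SF _ (xsS i).
  have -> : q v 0 (col j) - q (xs i) 0 (col j) = (q v - q (xs i)) 0 (col j).
    by rewrite !mxE.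
  rewrite Fvx qS ?xsS // !mxE /= (inj_in_eq sg_inj) ?xsS //.
  by rewrite (inj_eq enum_val_inj) eq_sym.
by rewrite -[X in (X <= _)%N](mxrank1 R) -minor1 mxrank_mxsub_le.
Qed.

End RigidityMatrix.

Section VertexExtensions.
Variables (R : realType) (T : finType) (d : nat).
Local Notation placement := (T -> 'rV[R]_d).
Local Notation rd := (rd R d).

Lemma avoids_add_edge (F : rel T) v a b :
  avoids F v -> a != v -> b != v -> avoids (add_edge F a b) v.
Proof.
move=> F_v av bv x y; rewrite /add_edge.
by case/orP => [/orP [/F_v //|]|] /andP [/eqP -> /eqP ->]; rewrite av bv.
Qed.

Lemma subrel_add_edge (F : rel T) a b : subrel F (add_edge F a b).
Proof. by move=> x y Fxy; rewrite /add_edge Fxy. Qed.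

(* At a placement generic for [e], [e + ab] and [F], a row of [ab] in the
   row space of [F] would lie in that of [e]. *)
Lemma rd_add_edge_subrel (F e : rel T) a b : subrel F e ->
  (rd e < rd (add_edge e a b))%N -> (rd F < rd (add_edge F a b))%N.
Proof.
move=> Fe lt_e.
have [p [<- [rank_e rank_eab]]] : exists p : placement,
    \rank (rigmx F p) = rd F /\ (rd e <= \rank (rigmx e p))%N /\
    (rd (add_edge e a b) <= \rank (rigmx (add_edge e a b) p))%N.
  apply: exists_max_rank_and; first exact/genericI/generic_max_rank/generic_max_rank.
  by apply: generic_exists2; (exact: generic_max_rank || exact: exists_max_rank).
apply: leq_trans (rank_rigmx_le_rd (add_edge F a b) p); rewrite ltnNge.
apply: contraL lt_e => le_Fab; rewrite -leqNgt.
have FFab : (rigmx F p <= rigmx (add_edge F a b) p)%MS.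
  exact: rigmx_subrel (subrel_add_edge a b).
have FabF : (rigmx (add_edge F a b) p <= rigmx F p)%MS.
  by rewrite -(mxrank_leqif_sup FFab).2 eqn_leq mxrankS.
have eabe : (rigmx (add_edge e a b) p <= rigmx e p)%MS.
  apply: rigmx_subP => x y; have [/rigrow_sub //|not_exy] := boolP (e x y).
  rewrite /add_edge (negbTE not_exy) /= => abxy.
  apply: submx_trans (rigmx_subrel p Fe); apply: submx_trans FabF.
  by apply: rigrow_sub; rewrite /add_edge -orbA abxy orbT.
by apply: leq_trans rank_eab (leq_trans (mxrankS eabe) (rank_rigmx_le_rd _ _)).
Qed.

Section AddVertex.
Variables (F K : rel T) (v : T).
Hypotheses (F_v : avoids F v) (FK : subrel F K).

Lemma rd_zero_extension (S : {set T}) :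
  {subset S <= K v} -> v \notin S -> (#|S| <= d)%N ->
  (rd F + #|S| <= rd K)%N.
Proof.
move=> SK vS Sd; pose sg x := index x (enum S).
have [p [<- rank_proj]] : exists p : placement, \rank (rigmx F p) = rd F /\
    (#|S| <= \rank (rigmx K p *m vertex_proj R d v))%N.
  apply: exists_max_rank_and.
    exact/generic_rank_ge/lerp_linear_mulmx/lerp_linear_rigmx.
  exists (fun x => if x == v then 0 else - unit_row R d (sg x)).
  apply: (rank_vertex_proj_ge (sg := sg)) => // [x xS|x y xS yS|x xS].
  - by apply: leq_trans _ Sd; rewrite cardE /sg index_mem mem_enum.
  - by apply: (index_inj x); rewrite mem_enum.
  - by rewrite eqxx ifN ?sub0r ?opprK //; apply: contraNneq vS => <-.
apply: leq_trans (rank_rigmx_le_rd K p); rewrite addnC.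
apply: leq_trans (mxrank_split_ker (rigmx_subrel p FK) (rigmx_vertex_proj p F_v)).
by rewrite leq_add2r.
Qed.

(* Placing [v] at the midpoint of [a] and [b] puts the row of [ab] in the
   span of those of [va] and [vb]; with [ab] independent of [F], the rank
   rises by [d] from the columns of [v] plus one. *)
Lemma rd_one_extension (N : {set T}) a b :
  {subset N <= K v} -> v \notin N -> #|N| = d.+1 ->
  a \in N -> b \in N -> a != b ->
  (rd F < rd (add_edge F a b))%N ->
  (rd F + d.+1 <= rd K)%N.
Proof.
move=> NK vN Nd aN bN ab lt_Fab.
have [av bv] : a != v /\ b != v by split; apply: contraNneq vN => <-.
have Fab_v := avoids_add_edge F_v av bv.
pose mid : placement -> placement := midpoint_at v a b.
pose S := N :\ b; pose sg x := index x (enum S).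
have cardS : #|S| = d by move: Nd; rewrite (cardsD1 b N) bN add1n => -[].
have SN : {subset S <= N} by move=> x; rewrite in_setD1 => /andP [].
have [p [rank_Fab rank_proj]] : exists p : placement,
    \rank (rigmx (add_edge F a b) p) = rd (add_edge F a b) /\
    (d <= \rank (rigmx K (mid p) *m vertex_proj R d v))%N.
  apply: exists_max_rank_and.
    apply/generic_rank_ge/(lerp_linear_comp (u := mid)
      (M := fun p => rigmx K p *m vertex_proj R d v)) => [|t p1 p2].
      exact/lerp_linear_mulmx/lerp_linear_rigmx.
    exact: midpoint_at_lerp.
  exists (fun x => if x == b then unit_row R d (sg a) else - unit_row R d (sg x)).
  rewrite -{1}cardS; apply: (rank_vertex_proj_ge (sg := sg)).
  - by move=> x /SN/NK.
  - by move=> x xS; rewrite -cardS cardE index_mem mem_enum.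
  - by move=> x y xS yS; apply: (index_inj x); rewrite mem_enum.
  - move=> x; rewrite in_setD1 => /andP [xb xN].
    have xv : x != v by apply: contraNneq vN => <-.
    rewrite /mid /midpoint_at /= !eqxx (negbTE ab) (negbTE xv) (negbTE xb).
    by rewrite addNr scaler0 sub0r opprK.
have mid_off x : x != v -> mid p x = p x.
  by move/negbTE; rewrite /mid /midpoint_at => ->.
have FabK : (rigmx (add_edge F a b) (mid p) <= rigmx K (mid p))%MS.
  apply: (rigmx_add_edge_midpoint FK (NK _ aN) (NK _ bN) ab av bv).
  by rewrite (mid_off _ av) (mid_off _ bv) /mid /midpoint_at eqxx.
have := mxrank_split_ker FabK (rigmx_vertex_proj (mid p) Fab_v).
rewrite (rigmx_eq_off Fab_v mid_off) rank_Fab => rank_K.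
apply: leq_trans (leq_trans rank_K (rank_rigmx_le_rd K (mid p))).
by rewrite -addSnnS addnC leq_add.
Qed.

End AddVertex.

End VertexExtensions.

Section Positions.
Variables (T : finType) (W : {set T}).

Definition position (s : {perm T}) (x : T) := #|[set y in W | precedes s y x]|.

Lemma position_lt s x : x \in W -> (position s x < #|W|)%N.
Proof.
move=> xW; apply/proper_card/properP; split.
  by apply/subsetP => y; rewrite inE => /andP [].
by exists x => //; rewrite inE /precedes ltnn andbF.
Qed.

Lemma position_lt_precedes s x y :
  x \in W -> precedes s x y -> (position s x < position s y)%N.
Proof.
move=> xW sxy; apply/proper_card/properP; split.
  apply/subsetP => z; rewrite !inE => /andP [-> szx] /=.
  exact: ltn_trans szx sxy.
by exists x; rewrite !inE ?xW ?sxy /precedes ?ltnn ?andbF.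
Qed.

Lemma position_inj s : {in W &, injective (position s)}.
Proof.
move=> x y xW yW eq_pos; apply/eqP/negPn/negP => neq_xy.
have neq_rank : enum_rank (s x) != enum_rank (s y).
  by rewrite (inj_eq enum_rank_inj) (inj_eq (@perm_inj _ s)).
case: (ltngtP (enum_rank (s x)) (enum_rank (s y))) => [sxy|syx|/val_inj eq_rank].
- by have := position_lt_precedes xW sxy; rewrite eq_pos ltnn.
- by have := position_lt_precedes yW syx; rewrite eq_pos ltnn.
- by rewrite eq_rank eqxx in neq_rank.
Qed.

Lemma sum_position s (f : nat -> nat) :
  (\sum_(x in W) f (position s x) = \sum_(j < #|W|) f j)%N.
Proof.
have uniq_pos : uniq [seq position s x | x <- enum W].
  by rewrite map_inj_in_uniq ?enum_uniq // => x y; rewrite !mem_enum; apply: position_inj.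
rewrite -big_enum -(big_map (position s) xpredT) -(big_mkord xpredT) /index_iota subn0.
apply/perm_big/uniq_perm; rewrite ?iota_uniq //.
apply: (uniq_min_size uniq_pos _ _).2.
  move=> j /mapP [x]; rewrite mem_enum => /(position_lt s) pos_lt ->.
  by rewrite mem_iota.
by rewrite size_map size_iota cardE.
Qed.

Lemma position_tperm s x w : x \in W -> w \in W ->
  position (tperm x w * s)%g x = position s w.
Proof.
move=> xW wW; rewrite /position -(card_preimset _ (@perm_inj _ (tperm x w))).
congr #|pred_of_set _|; apply/setP => y; rewrite !inE /precedes !permM tpermL tpermK.
by case: tpermP => [->|->|//]; rewrite ?xW ?wW.
Qed.

(* By symmetry every vertex of [W] has the same distribution of positions,
   and in each ordering the positions of [W] are [0, ..., #|W| - 1]. *)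
Lemma sum_perm_position x (f : nat -> nat) : x \in W ->
  (#|W| * \sum_(s : {perm T}) f (position s x) =
   #|{perm T}| * \sum_(j < #|W|) f j)%N.
Proof.
move=> xW.
have sym w : w \in W ->
    (\sum_(s : {perm T}) f (position s x) = \sum_(s : {perm T}) f (position s w))%N.
  move=> wW; rewrite (reindex_inj (mulgI (tperm x w))) /=.
  by apply: eq_bigr => s _; rewrite position_tperm.
transitivity (\sum_(w in W) \sum_(s : {perm T}) f (position s w))%N.
  by rewrite -sum1_card big_distrl /=; apply: eq_bigr => w /sym <-; rewrite mul1n.
by rewrite exchange_big /= (eq_bigr _ (fun s _ => sum_position s f)) sum_nat_const.
Qed.

End Positions.

Lemma sum_minn_bin d k : (d <= k)%N ->
  (\sum_(j < k.+1) minn j d.+1 + 'C(d.+2, 2) = k.+1 * d.+1)%N.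
Proof.
elim: k => [|k IHk]; first by rewrite leqn0 => /eqP ->; rewrite big_ord1.
rewrite leq_eqVlt => /orP [/eqP ->|lt_dk].
  have -> : (\sum_(j < k.+2) minn j k.+2 = \sum_(j < k.+2) j)%N.
    by apply: eq_bigr => j _; apply/minn_idPl/ltnW.
  rewrite -(big_mkord xpredT (fun j => j)) bin2_sum.
  have := bin_ffact k.+2 2; have := bin_ffact k.+3 2.
  by rewrite !ffactnS !ffactn0 (_ : 2`! = 2) //; nia.
rewrite big_ord_recr /= -addnA [(minn _ _ + _)%N]addnC addnA IHk //.
by rewrite (minn_idPr lt_dk) mulSn addnC.
Qed.

Lemma ler_sub_div_div (R : realFieldType) (a c n m p : R) : 0 < m -> 0 < p ->
  p * (m * n) <= m * a + p * c -> n - c / m <= a / p.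
Proof.
move=> m_gt0 p_gt0 ineq; rewrite -subr_ge0.
have -> : a / p - (n - c / m) = (m * a + p * c - p * (m * n)) / (p * m).
  by field; rewrite ?gt_eqF.
by rewrite divr_ge0 ?subr_ge0 // ltW // mulr_gt0.
Qed.

Section EarlierNeighbours.
Variables (T : finType) (e : rel T) (v : T).
Hypotheses (e_sym : symmetric e) (e_irr : irreflexive e).

Definition earlier_nbrs (s : {perm T}) := [set u | e v u && precedes s u v].

Lemma card_earlier_nbrs s :
  #|earlier_nbrs s| = position (v |: [set u | e v u]) s v.
Proof.
apply: eq_card => u; rewrite !inE.
by have [->|] := eqVneq u v; rewrite ?e_irr /precedes ?ltnn.
Qed.

Lemma nonedge_in_nbrs (N : {set T}) n :
  ~ has_Kn_subgraph e n.+1 -> {subset N <= e v} -> v \notin N -> #|N| = n ->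
  exists a b, [/\ a \in N, b \in N, a != b & ~~ e a b].
Proof.
move=> noK Nv vN cardN; apply: contrapT => all_adj; apply: noK.
exists (v |: N); split; first by rewrite cardsU1 vN cardN.
move=> x y; rewrite !in_setU1 => /predU1P [->|xN] /predU1P [->|yN] xy.
- by rewrite eqxx in xy.
- exact: Nv.
- by rewrite e_sym; apply: Nv.
- by apply/negPn/negP => not_exy; apply: all_adj; exists x, y.
Qed.

Lemma rcstar_pi_ge_minn (R : realType) d s :
  Rd_closed R d e -> ~ has_Kn_subgraph e d.+2 ->
  (minn #|earlier_nbrs s| d.+1 <= rcstar_pi R d e v s)%N.
Proof.
move=> closed noK; set S := earlier_nbrs s.
have SK : {subset S <= keep_earlier e v s v}.
  by move=> x; rewrite inE /keep_earlier eqxx.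
have vS : v \notin S by rewrite inE e_irr.
have F_v : avoids (del_vertex e v) v by move=> x y /and3P [_ -> ->].
have FK : subrel (del_vertex e v) (keep_earlier e v s).
  by move=> x y /and3P [exy /negbTE xv /negbTE yv]; rewrite /keep_earlier exy xv yv.
have rcstar_pi_ge m : (rd R d (del_vertex e v) + m <= rd R d (keep_earlier e v s))%N ->
    (m <= rcstar_pi R d e v s)%N.
  by move=> le_m; rewrite leq_subRL // (leq_trans (leq_addr _ _) le_m).
have [Sd|dS] := leqP #|S| d.
  rewrite (minn_idPl (leqW Sd)); apply: rcstar_pi_ge.
  by have := rd_zero_extension R F_v FK SK vS Sd.
rewrite (minn_idPr dS); apply: rcstar_pi_ge.
have [ns [ns_uniq ns_size nsS]] := card_geqP dS.
set N := [set x in ns].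
have cardN : #|N| = d.+1 by rewrite cardsE (card_uniqP ns_uniq).
have NS : {subset N <= S} by move=> x; rewrite inE => /nsS.
have NK : {subset N <= keep_earlier e v s v} by move=> x /NS /SK.
have Ne : {subset N <= e v} by move=> x /NS; rewrite inE => /andP [].
have vN : v \notin N by apply: contra vS => /NS.
have [a [b [aN bN ab not_eab]]] := nonedge_in_nbrs noK Ne vN cardN.
apply: (rd_one_extension F_v FK NK vN cardN aN bN ab).
apply: (rd_add_edge_subrel (e := e)); first by move=> x y /and3P [].
by rewrite closed.
Qed.

End EarlierNeighbours.

Theorem lemma3p9 (R : realType) (d : nat) (T : finType) (e : rel T)
  (e_sym : symmetric e) (e_irr : irreflexive e) (v : T) (k : nat) :
  Rd_closed R d e ->
  deg e v = k -> (d.+1 <= k)%N ->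
  ~ has_Kn_subgraph e d.+2 ->
  rcstar R d e v >= d.+1%:R - 'C(d.+2, 2)%:R / k.+1%:R.
Proof.
move=> closed deg_k lt_dk noK.
set W := v |: [set u | e v u].
have vW : v \in W by rewrite setU11.
have cardW : #|W| = k.+1 by rewrite cardsU1 inE e_irr -deg_k.
have perm_gt0 : (0 < #|{perm T}|)%N by apply/card_gt0P; exists 1%g.
set A := (\sum_(s : {perm T}) rcstar_pi R d e v s)%N.
have avg : (#|{perm T}| * (k.+1 * d.+1) <= k.+1 * A + #|{perm T}| * 'C(d.+2, 2))%N.
  rewrite -(sum_minn_bin (ltnW lt_dk)) mulnDr leq_add2r -cardW.
  rewrite -(sum_perm_position (fun j => minn j d.+1) vW) leq_mul2l.
  apply/orP; right; apply: leq_sum => s _.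
  by rewrite -card_earlier_nbrs // rcstar_pi_ge_minn.
rewrite /rcstar -natr_sum; apply: ler_sub_div_div; rewrite ?ltr0n //.
by rewrite -!natrM -!natrD ler_nat.
Qed.
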